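(* Let $R$ be a Hecke symmetry with parameter $q$ on a finite dimensional vector space $V$, let $\mathbb T=\mathbb T(V)$ be the tensor algebra and $I$ its ideal generated by $\operatorname{Ker}(R-q\,\mathrm{id})\subset V^{\otimes2}$ (so $\Lambda(V,R)=\mathbb T/I$). Fix $n>1$ and put $L_k=\{a\in\mathbb T_k: a\,\mathbb T_{n-k}\subset I_n\}$ for $0\le k<n$, and $$y_k=\sum_{j=0}^{k-1}(-1)^{j}q^{\,k-1-j}\,T_1T_2\cdots T_j\in\mathcal H_k\quad(k>0),$$ (the $j=0$ term being $q^{k-1}$), acting on $\mathbb T_k=V^{\otimes k}$ via $R$. Then for $0<k<n$ one has $y_kL_k\subset V\otimes L_{k-1}$.
   Context: A Hecke symmetry with parameter $0\neq q\in\Bbbk$ on $V$ is a linear operator $R$ on $V\otimes V$ with $(R+\mathrm{id})(R-q\,\mathrm{id})=0$ and $(R\otimes\mathrm{id})(\mathrm{id}\otimes R)(R\otimes\mathrm{id})=(\mathrm{id}\otimes R)(R\otimes\mathrm{id})(\mathrm{id}\otimes R)$. The Hecke algebra $\mathcal H_k(q)$ acts on $V^{\otimes k}$ with $T_i$ acting by $\mathrm{id}^{\otimes(i-1)}\otimes R\otimes\mathrm{id}^{\otimes(k-i-1)}$. Subscripts denote homogeneous components; $\mathbb T_0=\Bbbk$. *)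

(* V = K^d with its standard basis; V^{(x)k} = functions on
   k-tuples of basis indices. *)
From HB Require Import structures.
From mathcomp Require Import all_boot all_algebra.
Set Implicit Arguments. Unset Strict Implicit. Unset Printing Implicit Defensive.
Import GRing.Theory.
Local Open Scope ring_scope.

Section Hecke.
Variables (K : fieldType) (d : nat).

Definition tensor (k : nat) := {ffun k.-tuple 'I_d -> K^o}.
HB.instance Definition _ k := GRing.Lmodule.on (tensor k).

Definition tprod k m (a : tensor k) (b : tensor m) : tensor (k + m) :=
  [ffun w : (k + m).-tuple 'I_d =>
     a [tuple tnth w (lshift m i) | i < k] * b [tuple tnth w (rshift k j) | j < m]].

Definition tcastT k m (e : k = m) (a : tensor k) : tensor m :=
  [ffun w : m.-tuple 'I_d => a (tcast (esym e) w)].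

(* R : V(x)V -> V(x)V given by its matrix in the basis e_i (x) e_j:
   (R x)(i,j) = sum_(a,b) Rc i j a b * x(a,b). *)
Definition coef := 'I_d -> 'I_d -> 'I_d -> 'I_d -> K.

Definition repl k (w : k.-tuple 'I_d) (p : nat) (a b : 'I_d) : k.-tuple 'I_d :=
  [tuple if val j == p then a else if val j == p.+1 then b else tnth w j | j < k].

(* action of id^{(x)p} (x) R (x) id^{(x)(k-p-2)} on T_k, i.e. of the Hecke
   generator T_(p+1) (0-based position p); identity if p+2 > k *)
Definition Tact (Rc : coef) k (p : nat) (x : tensor k) : tensor k :=
  [ffun w : k.-tuple 'I_d =>
     if (p.+1 < k)%N then
       \sum_(a < d) \sum_(b < d) Rc (nth a w p) (nth a w p.+1) a b * x (repl w p a b)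
     else x w].

Definition Rop (Rc : coef) : tensor 2 -> tensor 2 := Tact Rc 0.

Definition is_hecke (Rc : coef) (q : K) : Prop :=
  [/\ q != 0,
      (forall x : tensor 2, let y := Rop Rc x - q *: x in Rop Rc y + y = 0) &
      (forall x : tensor 3,
         Tact Rc 0 (Tact Rc 1 (Tact Rc 0 x)) = Tact Rc 1 (Tact Rc 0 (Tact Rc 1 x)))].

Fixpoint prodT (Rc : coef) k (j : nat) (x : tensor k) : tensor k :=
  match j with
  | 0 => x
  | j'.+1 => prodT Rc j' (Tact Rc j' x)
  end.

Definition yop (Rc : coef) (q : K) k (x : tensor k) : tensor k :=
  \sum_(j < k) (((-1) ^+ j * q ^+ (k.-1 - j)) *: prodT Rc j x).

Inductive span k (P : tensor k -> Prop) : tensor k -> Prop :=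
| span_gen x : P x -> span P x
| span0 : span P 0
| spanD x y : span P x -> span P y -> span P (x + y)
| spanZ (c : K) x : span P x -> span P (c *: x).

Definition Igen (Rc : coef) (q : K) n (t : tensor n) : Prop :=
  exists i m (e : i + 2 + m = n) (a : tensor i) (x : tensor 2) (b : tensor m),
    Rop Rc x = q *: x /\ t = tcastT e (tprod (tprod a x) b).

Definition Ideal (Rc : coef) (q : K) n : tensor n -> Prop := span (@Igen Rc q n).

Definition Lsp (Rc : coef) (q : K) n k (a : tensor k) : Prop :=
  exists hk : (k <= n)%N, forall b : tensor (n - k),
    Ideal Rc q (tcastT (subnKC hk) (tprod a b)).

Definition VL (Rc : coef) (q : K) n k : tensor k -> Prop :=
  span (fun t => exists (v : tensor 1) (l : tensor k.-1) (e : 1 + k.-1 = k),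
                   Lsp Rc q n l /\ t = tcastT e (tprod v l)).

End Hecke.

(* Fix b in T_m with k + m = n + 1.
   (1) I_n is spanned by q-eigenvectors of the generators, so a (x) b lies
       in I_n (x) V, the span of eigenvectors away from the last letter.
   (2) y_(n+1) maps every eigenvector into V (x) I_n: around the eigen-position
       two terms cancel, earlier terms stay eigenvectors there and, by the
       braid relation, later ones become eigenvectors one position further.
   (3) Since T is invertible, T_1...T_k (a (x) w) = T_1...T_n (a (x) u) for
       some u, which lies in V (x) I_n because T_1...T_n shifts eigenvectors.
   (4) y_(n+1) (a (x) b) = q^(n+1-k) (y_k a) (x) b + (-1)^k T_1...T_k (a (x) y_m b),
       so (y_k a) (x) b lies in V (x) I_n, i.e. the slices of y_k a lie in L_(k-1). *)

From Pilot Require Import Defs.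
From HB Require Import structures.
From mathcomp Require Import all_boot all_algebra.
From mathcomp Require Import zify ring.
Set Implicit Arguments. Unset Strict Implicit. Unset Printing Implicit Defensive.
Import GRing.Theory.
Local Open Scope ring_scope.

Section Spans.
Variables (K : fieldType) (d : nat).
Local Notation tensor := (tensor K d).

Lemma span_sum m (P : tensor m -> Prop) I (r : seq I) (Q : pred I) (F : I -> tensor m) :
  (forall i, Q i -> Defs.span P (F i)) -> Defs.span P (\sum_(i <- r | Q i) F i).
Proof. by move=> hF; elim/big_ind: _ => //; [exact: span0 | exact: spanD]. Qed.

Lemma span_linear m m' (f : tensor m -> tensor m') (P : tensor m -> Prop)
    (Q : tensor m' -> Prop) x :
  linear f -> (forall y, P y -> Defs.span Q (f y)) -> Defs.span P x -> Defs.span Q (f x).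
Proof.
move=> /GRing.semilinear_linear [fZ fD] hPQ; elim=> [y /hPQ //|||c y _].
- by rewrite -(scale0r (0 : tensor m)) fZ /= scale0r; exact: span0.
- by move=> y z _ hy _ hz; rewrite fD; exact: spanD.
- by rewrite fZ /=; exact: spanZ.
Qed.

End Spans.

Section Coordinates.
Variables (K : fieldType) (d : nat).
Local Notation tensor := (tensor K d).
Local Notation word := (seq 'I_d).

(* The coefficient of t in T_n at the basis word s; words of the wrong
   length get coefficient 0, so that words can be cut and glued freely. *)
Definition tcoef n (s : word) (t : tensor n) : K :=
  if insub s is Some w then t w else 0.

Lemma tcoefE n (w : n.-tuple 'I_d) (t : tensor n) : tcoef w t = t w.
Proof. by rewrite /tcoef valK. Qed.

Lemma tensorP n (t1 t2 : tensor n) :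
  (forall s, size s = n -> tcoef s t1 = tcoef s t2) -> t1 = t2.
Proof. by move=> h; apply/ffunP => w; rewrite -!tcoefE h ?size_tuple. Qed.

Lemma tcoef_is_linear n s : linear_for *%R (@tcoef n s).
Proof.
by move=> c t1 t2; rewrite /tcoef; case: insub => [w|]; rewrite ?ffunE ?mulr0 ?addr0.
Qed.

HB.instance Definition _ n s :=
  GRing.isLinear.Build K (tensor n) K *%R (@tcoef n s) (@tcoef_is_linear n s).

Definition tensor_of n (f : word -> K) : tensor n := [ffun w => f (val w)].

Lemma tcoef_of n f s : size s = n -> tcoef s (tensor_of n f) = f s.
Proof.
by move=> hs; rewrite /tcoef; case: insubP => [w _ <-|]; rewrite ?ffunE // hs eqxx.
Qed.

Lemma tcoef_tcastT k m (e : k = m) (a : tensor k) s : tcoef s (tcastT e a) = tcoef s a.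
Proof.
subst m; rewrite /tcoef; case: insub => [w|] //.
by rewrite ffunE -tcoefE val_tcast tcoefE.
Qed.

Lemma eq_from_nth_any (T : Type) (s1 s2 : seq T) : size s1 = size s2 ->
  (forall x0 i, (i < size s1)%N -> nth x0 s1 i = nth x0 s2 i) -> s1 = s2.
Proof.
case: s1 => [|x s1] hs h; first by case: s2 hs h.
exact: (eq_from_nth (x0 := x) hs (h x)).
Qed.

Lemma tcoef_tprod k m (a : tensor k) (b : tensor m) s : size s = (k + m)%N ->
  tcoef s (tprod a b) = tcoef (take k s) a * tcoef (drop k s) b.
Proof.
move=> hs; rewrite {1}/tcoef; case: insubP => [w _ <-|]; last by rewrite hs eqxx.
rewrite ffunE -(tcoefE [tuple _ | i < k]) -(tcoefE [tuple _ | j < m]); congr (_ * _).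
- congr tcoef; apply: eq_from_nth_any => [|x0 i]; rewrite !size_tuple.
    by apply/esym/minn_idPl; rewrite leq_addr.
  by move=> hi; rewrite (nth_mktuple _ _ (Ordinal hi)) nth_take // (tnth_nth x0).
- congr tcoef; apply: eq_from_nth_any => [|x0 i]; rewrite !size_tuple.
    by rewrite addKn.
  by move=> hi; rewrite (nth_mktuple _ _ (Ordinal hi)) nth_drop (tnth_nth x0).
Qed.

(* The tensor product a (x) b with its degree N = k + m given explicitly,
   which avoids casts between k + m and N. *)
Definition tmul N k m (a : tensor k) (b : tensor m) : tensor N :=
  tensor_of N (fun s => tcoef (take k s) a * tcoef (drop k s) b).

Lemma tcoef_tmul N k m (a : tensor k) (b : tensor m) s : size s = N ->
  tcoef s (tmul N a b) = tcoef (take k s) a * tcoef (drop k s) b.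
Proof. exact: tcoef_of. Qed.

Lemma tmul_tprod k m N (e : (k + m)%N = N) (a : tensor k) (b : tensor m) :
  tcastT e (tprod a b) = tmul N a b.
Proof. by apply: tensorP => s hs; rewrite tcoef_tcastT tcoef_tprod ?tcoef_tmul // hs. Qed.

Lemma tprod_tmul k m (a : tensor k) (b : tensor m) : tprod a b = tmul (k + m) a b.
Proof. by apply: tensorP => s hs; rewrite tcoef_tprod ?tcoef_tmul. Qed.

Section TmulBilinear.
Variables (N k m : nat).

Lemma tmulDl (a1 a2 : tensor k) (b : tensor m) :
  tmul N (a1 + a2) b = tmul N a1 b + tmul N a2 b.
Proof. by apply: tensorP => s hs; rewrite raddfD /= !tcoef_tmul // raddfD mulrDl. Qed.

Lemma tmulZl c (a : tensor k) (b : tensor m) : tmul N (c *: a) b = c *: tmul N a b.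
Proof. by apply: tensorP => s hs; rewrite linearZ /= !tcoef_tmul // linearZ mulrA. Qed.

Lemma tmulDr (a : tensor k) (b1 b2 : tensor m) :
  tmul N a (b1 + b2) = tmul N a b1 + tmul N a b2.
Proof. by apply: tensorP => s hs; rewrite raddfD /= !tcoef_tmul // raddfD mulrDr. Qed.

Lemma tmulZr c (a : tensor k) (b : tensor m) : tmul N a (c *: b) = c *: tmul N a b.
Proof. by apply: tensorP => s hs; rewrite linearZ /= !tcoef_tmul // linearZ mulrCA. Qed.

Lemma tmul_suml (b : tensor m) I (r : seq I) (P : pred I) (F : I -> tensor k) :
  tmul N (\sum_(i <- r | P i) F i) b = \sum_(i <- r | P i) tmul N (F i) b.
Proof.
have tmul0l : tmul N (0 : tensor k) b = 0 by rewrite -(scale0r 0) tmulZl scale0r.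
exact: (big_morph (fun a => tmul N a b) (fun a1 a2 => tmulDl a1 a2 b) tmul0l).
Qed.

Lemma tmul_sumr (a : tensor k) I (r : seq I) (P : pred I) (F : I -> tensor m) :
  tmul N a (\sum_(i <- r | P i) F i) = \sum_(i <- r | P i) tmul N a (F i).
Proof.
have tmul0r : tmul N a (0 : tensor m) = 0 by rewrite -(scale0r 0) tmulZr scale0r.
exact: (big_morph (tmul N a) (tmulDr a) tmul0r).
Qed.

End TmulBilinear.

(* Left slices with |u| = 1 describe V (x) T_r,
   two-sided slices localize the action of a generator. *)
Definition slice r (u v : word) m (t : tensor m) : tensor r :=
  tensor_of r (fun s => tcoef (u ++ s ++ v) t).

Lemma tcoef_slice r u v m (t : tensor m) s : size s = r ->
  tcoef s (slice r u v t) = tcoef (u ++ s ++ v) t.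
Proof. exact: tcoef_of. Qed.

Lemma slice_is_linear r u v m : linear (@slice r u v m).
Proof.
move=> c t1 t2; apply: tensorP => s hs.
by rewrite tcoef_slice // !raddfD /= !linearZ_LR /= !tcoef_slice.
Qed.

HB.instance Definition _ r u v m :=
  GRing.isLinear.Build K (tensor m) (tensor r) *:%R (@slice r u v m)
    (@slice_is_linear r u v m).

Lemma slice_id m (t : tensor m) : slice m [::] [::] t = t.
Proof. by apply: tensorP => s hs; rewrite tcoef_slice // cats0. Qed.

Lemma slice_slice r r' u1 v1 u2 v2 m (t : tensor m) : (size u2 + r + size v2)%N = r' ->
  slice r u2 v2 (slice r' u1 v1 t) = slice r (u1 ++ u2) (v2 ++ v1) t.
Proof.
move=> hr; apply: tensorP => s hs.
rewrite tcoef_slice // [RHS]tcoef_slice // tcoef_slice ?size_cat ?hs.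
- by rewrite -!catA.
- by rewrite addnA.
Qed.

Lemma drop_cat_le (u w : word) k : (k <= size u)%N -> drop k (u ++ w) = drop k u ++ w.
Proof.
rewrite leq_eqVlt => /orP[/eqP->|h]; first by rewrite drop_size drop_size_cat.
by rewrite drop_cat h.
Qed.

Lemma slice_tmul N r k k' m m' u v (a : tensor k) (b : tensor m) :
  (size u + k')%N = k -> (m' + size v)%N = m -> (k' + m')%N = r -> (k + m)%N = N ->
  slice r u v (tmul N a b) = tmul r (slice k' u [::] a) (slice m' [::] v b).
Proof.
move=> hk hm hr hN; apply: tensorP => s hs.
have hks : (k' <= size s)%N by rewrite hs -hr leq_addr.
rewrite tcoef_slice // !tcoef_tmul ?size_cat ?hs; try lia.
rewrite !tcoef_slice ?size_takel ?size_drop ?hs; try lia.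
have hku : (k < size u)%N = false by rewrite -hk ltnNge leq_addr.
have ek : (k - size u)%N = k' by rewrite -hk addKn.
by rewrite take_cat drop_cat hku ek takel_cat // drop_cat_le // cats0.
Qed.

Definition etensor n (u : word) : tensor n := tensor_of n (fun s => (s == u)%:R).

Lemma sum_etensor n (r : word) (G : word -> K) : size r = n ->
  \sum_(w : n.-tuple 'I_d) (r == val w)%:R * G (val w) = G r.
Proof.
move=> hr; have hr' : size r == n by apply/eqP.
rewrite (bigD1 (Tuple hr')) //= eqxx mul1r big1 ?addr0 // => w hw.
case: eqP => [er|]; last by rewrite mul0r.
by case/eqP: hw; apply: val_inj.
Qed.

Lemma split_left N i r (t : tensor N) : (i + r)%N = N ->
  t = \sum_(u : i.-tuple 'I_d) tmul N (etensor i u) (slice r u [::] t).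
Proof.
move=> hN; apply: tensorP => s hs; rewrite linear_sum /=.
have hsi : size (take i s) = i by rewrite size_takel // hs -hN leq_addr.
have hsr : size (drop i s) = r by rewrite size_drop hs -hN addKn.
under eq_bigr => u _ do rewrite tcoef_tmul // !tcoef_of ?size_tuple //.
by rewrite (sum_etensor (fun u => tcoef (u ++ drop i s ++ [::]) t)) // cats0 cat_take_drop.
Qed.

Lemma split_right N r j (t : tensor N) : (r + j)%N = N ->
  t = \sum_(v : j.-tuple 'I_d) tmul N (slice r [::] v t) (etensor j v).
Proof.
move=> hN; apply: tensorP => s hs; rewrite linear_sum /=.
have hsr : size (take r s) = r by rewrite size_takel // hs -hN leq_addr.
have hsj : size (drop r s) = j by rewrite size_drop hs -hN addKn.
under eq_bigr => v _ do rewrite tcoef_tmul // !tcoef_of ?size_tuple // mulrC.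
by rewrite (sum_etensor (fun v => tcoef ([::] ++ take r s ++ v) t)) // cat_take_drop.
Qed.

End Coordinates.
Arguments etensor {K d} n u.

Section Generators.
Variables (K : fieldType) (d : nat) (Rc : coef K d).
Local Notation tensor := (tensor K d).
Local Notation word := (seq 'I_d).

Lemma split_at2 (s : word) p : (p.+1 < size s)%N ->
  exists u al be v, size u = p /\ s = u ++ al :: be :: v.
Proof.
move=> hp; exists (take p s).
have : (2 <= size (drop p s))%N by rewrite size_drop; lia.
case E: (drop p s) => [|al [|be v]] // _.
exists al, be, v; split; first by rewrite size_takel //; lia.
by rewrite -E cat_take_drop.
Qed.

Lemma nth_cat2 (T : Type) (x0 : T) u (a b : T) v (i : nat) :
  nth x0 (u ++ a :: b :: v) i =
  if (i < size u)%N then nth x0 u i else if i == size u then a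
  else if i == (size u).+1 then b else nth x0 v (i - (size u).+2).
Proof.
rewrite nth_cat; case: ltnP => // hi.
have [j ->] : exists j, i = (size u + j)%N by exists (i - size u)%N; lia.
rewrite addKn; case: j => [|[|j]]; rewrite ?addn0 ?eqxx //.
- by rewrite addn1 eqxx ifN //; lia.
- by rewrite !ifN /=; try lia; congr nth; lia.
Qed.

Lemma val_repl m (w : m.-tuple 'I_d) u al be v a b :
  val w = u ++ al :: be :: v -> val (repl w (size u) a b) = u ++ a :: b :: v.
Proof.
move=> hw; apply: eq_from_nth_any => [|x0 i].
  by rewrite size_tuple -(size_tuple w) hw !size_cat.
rewrite size_tuple => hi.
rewrite (nth_mktuple _ _ (Ordinal hi)) (tnth_nth x0) /= hw !nth_cat2.
case: ltnP => hiu; first by rewrite !ifN //; lia.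
by case: eqP => //; case: eqP.
Qed.

Lemma tcoef_Tact m p (x : tensor m) u al be v :
  size u = p -> size (u ++ al :: be :: v) = m ->
  tcoef (u ++ al :: be :: v) (Tact Rc p x) =
  \sum_(a < d) \sum_(b < d) Rc al be a b * tcoef (u ++ a :: b :: v) x.
Proof.
move=> <- hs; have hw : size (u ++ al :: be :: v) == m by apply/eqP.
rewrite -[u ++ _]/(val (Tuple hw)) tcoefE ffunE.
have -> : ((size u).+1 < m)%N by rewrite -hs size_cat /=; lia.
apply: eq_bigr => a _; apply: eq_bigr => b _.
rewrite -tcoefE (@val_repl m (Tuple hw) u al be v a b erefl) /= !nth_cat2 ltnn eqxx.
by rewrite ltnNge leqnSn /= eqxx ifN //; lia.
Qed.

Lemma Tact_id m p (x : tensor m) : (m <= p.+1)%N -> Tact Rc p x = x.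
Proof. by rewrite leqNgt => /negbTE hp; apply/ffunP => w; rewrite ffunE hp. Qed.

Lemma Tact_is_linear m p : linear (@Tact K d Rc m p).
Proof.
move=> c x y; case: (ltnP p.+1 m) => hp; last by rewrite !Tact_id.
apply: tensorP => s hs; rewrite -hs in hp.
have [u [al [be [v [<- es]]]]] := split_at2 hp; rewrite es in hs *.
rewrite !raddfD /= !linearZ_LR /= !tcoef_Tact // mulr_sumr -big_split.
apply: eq_bigr => a _; rewrite mulr_sumr -big_split.
by apply: eq_bigr => b _; rewrite raddfD /= linearZ_LR /=; ring.
Qed.

HB.instance Definition _ m p :=
  GRing.isLinear.Build K (tensor m) (tensor m) *:%R (@Tact K d Rc m p) (@Tact_is_linear m p).

Lemma prodT_is_linear m j : linear (@prodT K d Rc m j).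
Proof. by elim: j => [|j IH] c x y //=; rewrite linearP IH. Qed.

HB.instance Definition _ m j :=
  GRing.isLinear.Build K (tensor m) (tensor m) *:%R (@prodT K d Rc m j) (@prodT_is_linear m j).

(* Locality: a generator acting inside a slice acts on the slice; this
   transports relations proved in T_2 and T_3 to every position. *)
Lemma slice_Tact r u v m p (x : tensor m) :
  (p.+1 < r)%N -> (size u + r + size v)%N = m ->
  slice r u v (Tact Rc (size u + p) x) = Tact Rc p (slice r u v x).
Proof.
move=> hp hm; apply: tensorP => s hs; rewrite -hs in hp.
have [w [al [be [w' [<- es]]]]] := split_at2 hp; subst s.
have reassoc a b : u ++ (w ++ a :: b :: w') ++ v = (u ++ w) ++ a :: b :: (w' ++ v).
  by rewrite -!catA.
rewrite tcoef_Tact // tcoef_slice // reassoc (@tcoef_Tact _ (size u + size w)); last first.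
- by move: hs; rewrite -reassoc -hm !size_cat /=; lia.
- by rewrite size_cat.
apply: eq_bigr => a _; apply: eq_bigr => b _.
by rewrite tcoef_slice ?reassoc // -hs !size_cat.
Qed.

Lemma sum_swap4 (F G : 'I_d -> 'I_d -> K) (X : 'I_d -> 'I_d -> 'I_d -> 'I_d -> K) :
  \sum_a \sum_b F a b * (\sum_c \sum_e G c e * X a b c e) =
  \sum_c \sum_e G c e * (\sum_a \sum_b F a b * X a b c e).
Proof.
under eq_bigr => a _ do under eq_bigr => b _ do rewrite pair_big mulr_sumr.
under [RHS]eq_bigr => c _ do under eq_bigr => e _ do rewrite pair_big mulr_sumr.
rewrite [LHS]pair_big [RHS]pair_big exchange_big /=.
by apply: eq_bigr => -[c e] _; apply: eq_bigr => -[a b] _ /=; rewrite mulrCA.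
Qed.

Lemma Tact_comm m p r (x : tensor m) : (p.+2 <= r)%N -> (r.+1 < m)%N ->
  Tact Rc p (Tact Rc r x) = Tact Rc r (Tact Rc p x).
Proof.
move=> hpr hrm; apply: tensorP => s hs; rewrite -hs in hrm.
have [w1 [b1 [b2 [w2 [hr es]]]]] := split_at2 hrm; subst s.
have hp : (p.+1 < size w1)%N by rewrite hr; lia.
have [u [a1 [a2 [v [hu ew1]]]]] := split_at2 hp; subst w1.
have hsz a b c e : size (u ++ a :: b :: v ++ c :: e :: w2) = m.
  by move: hs; rewrite !size_cat /= !size_cat /=; lia.
have hr' a b : size (u ++ a :: b :: v) = r by rewrite -hr !size_cat.
have reassoc a b c e :
    (u ++ a :: b :: v) ++ c :: e :: w2 = u ++ a :: b :: v ++ c :: e :: w2.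
  by rewrite -catA.
rewrite [in LHS]reassoc (@tcoef_Tact _ p) ?hsz // (@tcoef_Tact _ r) //.
under eq_bigr => a _ do under eq_bigr => b _ do
  rewrite -reassoc (@tcoef_Tact _ r) ?reassoc //.
under [RHS]eq_bigr => c _ do under eq_bigr => e _ do
  rewrite reassoc (@tcoef_Tact _ p) //.
rewrite (sum_swap4 (fun a b => Rc a1 a2 a b) (fun c e => Rc b1 b2 c e)
  (fun a b c e => tcoef ((u ++ [:: a, b & v]) ++ [:: c, e & w2]) x)).
apply: eq_bigr => c _; apply: eq_bigr => e _; congr (_ * _).
by apply: eq_bigr => a _; apply: eq_bigr => b _; rewrite reassoc.
Qed.

Lemma take_cat_pair k (u : word) al be v : ((size u).+2 <= k)%N ->
  take k (u ++ al :: be :: v) = u ++ al :: be :: take (k - (size u).+2) v.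
Proof.
move=> h; rewrite take_cat ltnNge (leq_trans (leqnSn _) (ltnW h)) /=.
by have -> : (k - size u = (k - (size u).+2).+2)%N by lia.
Qed.

Lemma drop_cat_pair k (u : word) al be v : ((size u).+2 <= k)%N ->
  drop k (u ++ al :: be :: v) = drop (k - (size u).+2) v.
Proof.
move=> h; rewrite drop_cat ltnNge (leq_trans (leqnSn _) (ltnW h)) /=.
by have -> : (k - size u = (k - (size u).+2).+2)%N by lia.
Qed.

Lemma tmul_Tact_left N k m p (a : tensor k) (b : tensor m) :
  (p.+1 < k)%N -> (k + m)%N = N ->
  Tact Rc p (tmul N a b) = tmul N (Tact Rc p a) b.
Proof.
move=> hp hN; apply: tensorP => s hs.
have hps : (p.+1 < size s)%N by rewrite hs; lia.
have [u [al [be [v [hu es]]]]] := split_at2 hps; subst s.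
have hk : ((size u).+2 <= k)%N by rewrite hu.
rewrite (tcoef_Tact _ hu) // tcoef_tmul // take_cat_pair // drop_cat_pair //.
have hsv : (size v = N - p.+2)%N by move: hs; rewrite size_cat /= hu; lia.
rewrite (tcoef_Tact _ hu); last by rewrite size_cat /= size_takel ?hu ?hsv; lia.
rewrite mulr_suml; apply: eq_bigr => a' _; rewrite mulr_suml; apply: eq_bigr => b' _.
rewrite tcoef_tmul ?size_cat /= ?hsv ?hu; last lia.
by rewrite take_cat_pair ?drop_cat_pair ?hu // mulrA.
Qed.

Lemma tmul_Tact_right N k m p (a : tensor k) (b : tensor m) : (k + m)%N = N ->
  Tact Rc (k + p) (tmul N a b) = tmul N a (Tact Rc p b).
Proof.
move=> hN; case: (ltnP p.+1 m) => hp; last by rewrite !Tact_id //; lia.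
apply: tensorP => s hs; have hps : ((k + p).+1 < size s)%N by rewrite hs; lia.
have [u [al [be [v [hu es]]]]] := split_at2 hps; subst s.
have hku : (k <= size u)%N by rewrite hu leq_addr.
have hu' : size (drop k u) = p by rewrite size_drop hu addKn.
have hsv : (size v = m - p.+2)%N by move: hs; rewrite size_cat /= hu; lia.
rewrite (tcoef_Tact _ hu) // tcoef_tmul // takel_cat // drop_cat_le //.
rewrite (tcoef_Tact _ hu'); last by rewrite size_cat /= hu' hsv; lia.
rewrite mulr_sumr; apply: eq_bigr => a' _; rewrite mulr_sumr; apply: eq_bigr => b' _.
rewrite tcoef_tmul ?size_cat /= ?hsv ?hu; last lia.
by rewrite takel_cat ?drop_cat_le // mulrCA.
Qed.

Lemma prodT_tmul_left N k m j (a : tensor k) (b : tensor m) : (j < k)%N -> (k + m)%N = N ->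
  prodT Rc j (tmul N a b) = tmul N (prodT Rc j a) b.
Proof. by elim: j a => [|j IH] a hj hN //=; rewrite tmul_Tact_left // IH // ltnW. Qed.

Lemma prodT_tmul_shift N k m i (a : tensor k) (b : tensor m) : (k + m)%N = N ->
  prodT Rc (k + i) (tmul N a b) = prodT Rc k (tmul N a (prodT Rc i b)).
Proof.
by move=> hN; elim: i b => [|i IH] b; rewrite ?addn0 // addnS /= tmul_Tact_right // IH.
Qed.

End Generators.

Section Ideal.
Variables (K : fieldType) (d : nat) (Rc : coef K d) (q : K).
Local Notation tensor := (tensor K d).

(* x is a q-eigenvector of the generator T_(p+1) acting at positions p, p+1
   (0-based).  These vectors span the degree-m part of the ideal I. *)
Definition qeigen m p (x : tensor m) : Prop := (p.+1 < m)%N /\ Tact Rc p x = q *: x.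

Lemma generator_qeigen N (t : tensor N) : Igen Rc q t -> exists p, qeigen p t.
Proof.
case=> i [m [e [a [x [b [hx ->]]]]]]; exists i; split; first by lia.
rewrite tmul_tprod tprod_tmul tmul_Tact_left; try lia.
by rewrite -[i in Tact _ i]addn0 tmul_Tact_right // -/(Rop Rc x) hx tmulZr tmulZl.
Qed.

(* Conversely, expanding an eigenvector at position p along the letters
   outside p, p+1 writes it as a sum of generators of the ideal. *)
Lemma qeigen_Ideal N p (t : tensor N) : qeigen p t -> Ideal Rc q t.
Proof.
case=> hp ht; have hN : (p + 2 + (N - (p + 2)) = N)%N by lia.
rewrite (split_right t hN); apply: span_sum => v _.
rewrite [slice _ _ _ t](@split_left _ _ _ p 2 _ erefl) tmul_suml; apply: span_sum => u _.
rewrite slice_slice /=; last by rewrite size_tuple addn0.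
apply: span_gen.
exists p, (N - (p + 2))%N, hN, (etensor p u), (slice 2 u v t), (etensor _ v).
split; last by rewrite tmul_tprod tprod_tmul.
have hsz : (size u + 2 + size v = N)%N by rewrite !size_tuple.
have -> : Rop Rc (slice 2 u v t) = slice 2 u v (Tact Rc (size u + 0) t) by rewrite slice_Tact.
by rewrite addn0 size_tuple ht linearZ.
Qed.

Definition VxI N (t : tensor N.+1) : Prop :=
  forall u : 1.-tuple 'I_d, Ideal Rc q (slice N u [::] t).

Lemma VxI_D N (x y : tensor N.+1) : VxI x -> VxI y -> VxI (x + y).
Proof. by move=> hx hy u; rewrite linearD; exact: spanD (hx u) (hy u). Qed.

Lemma VxI_Z N c (x : tensor N.+1) : VxI x -> VxI (c *: x).
Proof. by move=> hx u; rewrite linearZ; exact: spanZ (hx u). Qed.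

Lemma span_VxI N (t : tensor N.+1) : Defs.span (@VxI N) t -> VxI t.
Proof.
elim=> [//||x y _ hx _ hy|c x _ hx]; [|exact: VxI_D|exact: VxI_Z].
by move=> u; rewrite linear0; exact: span0.
Qed.

Lemma qeigen_VxI N p (t : tensor N.+1) : qeigen p.+1 t -> VxI t.
Proof.
case=> hp ht u; apply: (@qeigen_Ideal _ p); split; first lia.
by rewrite -slice_Tact ?size_tuple ?add1n ?addn0 ?ht ?linearZ //; lia.
Qed.

(* Eigenvectors at a position not involving the last letter: they span
   I_N (x) V inside T_(N+1). *)
Definition qeigen_front N (x : tensor N.+1) : Prop :=
  exists2 p, (p.+1 < N)%N & qeigen p x.

Lemma Lsp_tmul_span N k m (a : tensor k) (u : tensor m) : (k + m)%N = N.+1 ->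
  Lsp Rc q N a -> Defs.span (@qeigen_front N) (tmul N.+1 a u).
Proof.
move=> hm [hk ha].
rewrite [tmul _ a u](@split_right _ _ _ N 1 _ (addn1 N)); apply: span_sum => v _.
rewrite (@slice_tmul _ _ _ _ _ k _ (N - k) [::] v) ?size_tuple //=; try lia.
rewrite slice_id.
have := ha (slice (N - k) [::] v u); rewrite tmul_tprod => hI.
apply: (span_linear (f := fun y : tensor N => tmul N.+1 y (etensor 1 v)) _ _ hI).
- by move=> c y z; rewrite tmulDl tmulZl.
move=> y /generator_qeigen [p [hp hy]].
apply: span_gen; exists p => //; split; first lia.
by rewrite tmul_Tact_left ?addn1 // hy tmulZl.
Qed.

End Ideal.

Section Antisymmetrizer.
Variables (K : fieldType) (d : nat) (Rc : coef K d) (q : K).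
Local Notation tensor := (tensor K d).

Lemma yop_is_linear m : linear (@yop K d Rc q m).
Proof.
move=> c x y; rewrite /yop scaler_sumr -big_split /=.
by apply: eq_bigr => j _; rewrite linearP scalerDr !scalerA mulrC.
Qed.

HB.instance Definition _ m :=
  GRing.isLinear.Build K (tensor m) (tensor m) *:%R (@yop K d Rc q m) (@yop_is_linear m).

(* Step (4): the terms j < k of y_(N+1) (a (x) b) act on a alone, the terms
   j = k + i factor as T_1...T_k composed with T_1...T_i acting on b. *)
Lemma yop_tmul N k m (a : tensor k) (b : tensor m) : (k <= N)%N -> (k + m)%N = N.+1 ->
  yop Rc q (tmul N.+1 a b) = q ^+ (N.+1 - k) *: tmul N.+1 (yop Rc q a) b
                             + (-1) ^+ k *: prodT Rc k (tmul N.+1 a (yop Rc q b)).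
Proof.
move=> hk hm; pose F j := ((-1) ^+ j * q ^+ (N - j)) *: prodT Rc j (tmul N.+1 a b).
rewrite /yop -(big_mkord xpredT F) (@big_cat_nat _ _ _ k 0 N.+1) ?leq0n ?(leq_trans hk) //.
congr (_ + _).
- rewrite big_mkord tmul_suml scaler_sumr; apply: eq_bigr => j _.
  rewrite /F prodT_tmul_left // tmulZl scalerA; congr (_ *: _).
  have hj := ltn_ord j; rewrite (_ : (N - j = (N.+1 - k) + (k.-1 - j))%N); last lia.
  by rewrite exprD; ring.
- rewrite -{1}[k]add0n big_addn big_mkord (_ : (N.+1 - k = m)%N); last lia.
  rewrite tmul_sumr linear_sum scaler_sumr; apply: eq_bigr => i _.
  rewrite /F addnC prodT_tmul_shift // tmulZr linearZ scalerA; congr (_ *: _).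
  have hi := ltn_ord i; rewrite (_ : (m.-1 - i = N - (k + i))%N); last lia.
  by rewrite exprD; ring.
Qed.

End Antisymmetrizer.

Section HeckeSymmetry.
Variables (K : fieldType) (d : nat) (Rc : coef K d) (q : K).
Local Notation tensor := (tensor K d).

Hypothesis quadratic :
  forall x : tensor 2, let y := Rop Rc x - q *: x in Rop Rc y + y = 0.
Hypothesis braid : forall x : tensor 3,
  Tact Rc 0 (Tact Rc 1 (Tact Rc 0 x)) = Tact Rc 1 (Tact Rc 0 (Tact Rc 1 x)).
Hypothesis q_neq0 : q != 0.

Lemma Tact_quadratic2 (x : tensor 2) :
  Tact Rc 0 (Tact Rc 0 x) = (q - 1) *: Tact Rc 0 x + q *: x.
Proof.
apply/eqP; rewrite -subr_eq0 -[X in _ == X](quadratic x) /Rop /= linearB linearZ /=.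
by rewrite scalerBl scale1r opprD opprB -[X in _ == X]addrA [X in _ == _ + X]addrCA !addrA.
Qed.

Lemma tcoef_as_slice m u v (x : tensor m) s :
  tcoef (u ++ s ++ v) x = tcoef s (slice (size s) u v x).
Proof. by rewrite tcoef_slice. Qed.

Lemma Tact_quadratic m p (x : tensor m) : (p.+1 < m)%N ->
  Tact Rc p (Tact Rc p x) = (q - 1) *: Tact Rc p x + q *: x.
Proof.
move=> hp; apply: tensorP => s hs; rewrite -hs in hp.
have [u [al [be [v [<- es]]]]] := split_at2 hp; subst s.
have hsz : (size u + 2 + size v)%N = m by rewrite -hs size_cat /=; lia.
have local (y : tensor m) : slice 2 u v (Tact Rc (size u) y) = Tact Rc 0 (slice 2 u v y).
  by rewrite -[size u]addn0 slice_Tact.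
rewrite -[u ++ _]/(u ++ [:: al; be] ++ v) !tcoef_as_slice; congr tcoef.
by rewrite linearD !linearZ /= !local Tact_quadratic2.
Qed.

Lemma Tact_braid m p (x : tensor m) : (p.+2 < m)%N ->
  Tact Rc p (Tact Rc p.+1 (Tact Rc p x)) = Tact Rc p.+1 (Tact Rc p (Tact Rc p.+1 x)).
Proof.
move=> hp; apply: tensorP => s hs; rewrite -hs in hp.
have [u [a1 [a2 [w [hu es]]]]] := split_at2 (ltnW hp); subst s p.
case: w hp hs => [|a3 v] hp hs; first by move: hp; rewrite size_cat /=; lia.
have hsz : (size u + 3 + size v)%N = m by rewrite -hs size_cat /=; lia.
have local0 (y : tensor m) : slice 3 u v (Tact Rc (size u) y) = Tact Rc 0 (slice 3 u v y).
  by rewrite -[size u]addn0 slice_Tact.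
have local1 (y : tensor m) :
    slice 3 u v (Tact Rc (size u).+1 y) = Tact Rc 1 (slice 3 u v y).
  by rewrite -[(size u).+1]addn1 slice_Tact.
rewrite -[u ++ _]/(u ++ [:: a1; a2; a3] ++ v) !tcoef_as_slice; congr tcoef.
by rewrite !(local0, local1) braid.
Qed.

Lemma prodT_Tact_far m j r (x : tensor m) : (j < r)%N ->
  prodT Rc j (Tact Rc r x) = Tact Rc r (prodT Rc j x).
Proof.
case: (ltnP r.+1 m) => hrm; last by rewrite !Tact_id.
elim: j x => [|j IH] x hj //=.
by rewrite Tact_comm // IH // ltnW.
Qed.

Lemma prodT_Tact_shift m j p (x : tensor m) : (p.+1 < j)%N -> (j < m)%N ->
  prodT Rc j (Tact Rc p x) = Tact Rc p.+1 (prodT Rc j x).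
Proof.
elim: j x => [|j IH] x // hpj hjm /=.
case: (ltngtP p.+1 j) => [hp|hp|ej]; first 2 last.
- by subst j; rewrite /= Tact_braid // prodT_Tact_far.
- by rewrite -Tact_comm ?IH //; lia.
- lia.
Qed.

Lemma prodT_qeigen_far m j r (x : tensor m) :
  (j < r)%N -> qeigen Rc q r x -> qeigen Rc q r (prodT Rc j x).
Proof. by move=> hj [hr hx]; split => //; rewrite -prodT_Tact_far // hx linearZ. Qed.

Lemma prodT_qeigen_shift m j p (x : tensor m) : (p.+1 < j)%N -> (j < m)%N ->
  qeigen Rc q p x -> qeigen Rc q p.+1 (prodT Rc j x).
Proof.
by move=> hpj hj [hp hx]; split; [lia | rewrite -prodT_Tact_shift // hx linearZ].
Qed.

(* Each generator is invertible, with inverse q^-1 (T - (q - 1)). *)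
Lemma Tact_surj m p (y : tensor m) : exists x, Tact Rc p x = y.
Proof.
case: (ltnP p.+1 m) => hp; last by exists y; rewrite Tact_id.
exists (q^-1 *: (Tact Rc p y - (q - 1) *: y)).
rewrite linearZ linearB linearZ /= Tact_quadratic // addrAC subrr add0r.
by rewrite scalerA mulVf ?scale1r.
Qed.

Lemma prodT_surj m j (y : tensor m) : exists x, prodT Rc j x = y.
Proof.
elim: j y => [|j IH] y; first by exists y.
have [z <-] := IH y; have [x <-] := Tact_surj j z.
by exists x.
Qed.

(* Step (2): y_(N+1) maps an eigenvector at position p into V (x) I_N.
   Terms j < p stay eigenvectors at p (then p > 0), the terms j = p, p+1
   cancel, and terms j > p+1 are eigenvectors at p + 1. *)
Lemma yop_qeigen_VxI N p (z : tensor N.+1) : qeigen Rc q p z -> VxI Rc q (yop Rc q z).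
Proof.
move=> hz; have [hp hTz] := hz.
apply: span_VxI.
pose F j := ((-1) ^+ j * q ^+ (N - j)) *: prodT Rc j z.
rewrite /yop /= -(big_mkord xpredT F) (@big_cat_nat _ _ _ p 0 N.+1); try lia.
rewrite (@big_cat_nat _ _ _ p.+2 p N.+1); try lia.
have cancel : \sum_(p <= j < p.+2) F j = 0.
  rewrite big_ltn // big_ltn // big_geq // addr0 /F /= hTz linearZ /= scalerA -scalerDl.
  have -> : (N - p = (N - p.+1).+1)%N by lia.
  by rewrite [X in X *: _](_ : _ = 0) ?scale0r // !exprS; ring.
rewrite cancel /= add0r; apply: spanD; rewrite big_nat_cond.
all: apply: span_sum => j /andP[/andP[hj1 hj2] _].
- have [p' ep] : exists p', p = p'.+1 by exists p.-1; lia.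
  by apply/spanZ/span_gen/(qeigen_VxI (p:=p')); rewrite -ep; exact: prodT_qeigen_far.
- by apply/spanZ/span_gen/(qeigen_VxI (p:=p)); apply: prodT_qeigen_shift.
Qed.

Lemma yop_tmul_VxI N k m (a : tensor k) (b : tensor m) : (k < N)%N -> (k + m)%N = N.+1 ->
  Lsp Rc q N a -> VxI Rc q (tmul N.+1 (yop Rc q a) b).
Proof.
move=> hkN hm ha.
have whole : VxI Rc q (yop Rc q (tmul N.+1 a b)).
  apply/span_VxI/(span_linear (@yop_is_linear _ _ _ _ _) _ (Lsp_tmul_span b hm ha)).
  by move=> y [p _ hy]; apply/span_gen/(yop_qeigen_VxI hy).
have shifted (w : tensor m) : VxI Rc q (prodT Rc k (tmul N.+1 a w)).
  have [u <-] := prodT_surj (N - k) w.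
  rewrite -prodT_tmul_shift // subnKC ?(ltnW hkN) //.
  apply/span_VxI/(span_linear (@prodT_is_linear _ _ _ _ _) _ (Lsp_tmul_span u hm ha)).
  by move=> y [p hp hy]; apply/span_gen/(qeigen_VxI (p:=p))/prodT_qeigen_shift.
have -> : tmul N.+1 (yop Rc q a) b = (q ^+ (N.+1 - k))^-1 *:
    (yop Rc q (tmul N.+1 a b) - (-1) ^+ k *: prodT Rc k (tmul N.+1 a (yop Rc q b))).
  by rewrite yop_tmul ?(ltnW hkN) // addrK scalerA mulVf ?scale1r // expf_neq0.
by apply/VxI_Z/VxI_D => //; rewrite -scaleN1r; apply/VxI_Z/VxI_Z.
Qed.

End HeckeSymmetry.

(* Expand y_k a along its first letter u; the slice of y_k a after u lies in
   L_(k-1) because its products with T_(n-k+1) are slices of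
   (y_k a) (x) T_(n-k+1), which lies in V (x) I_n. *)
Theorem lemma4p1 (K : fieldType) (d : nat) (Rc : coef K d) (q : K) (n k : nat)
    (a : tensor K d k) :
  is_hecke Rc q -> (1 < n)%N -> (0 < k)%N -> (k < n)%N ->
  Lsp Rc q n a -> VL Rc q n (yop Rc q a).
Proof.
case=> q_neq0 quadratic braid _; case: k a => [//|k] a _ hkn ha.
rewrite /VL [yop Rc q a](@split_left _ _ _ 1 k _ (add1n k)).
apply: span_sum => u _; apply: span_gen.
exists (etensor 1 u), (slice k u [::] (yop Rc q a)), (add1n k).
split; last by rewrite tmul_tprod.
exists (ltnW (ltnW hkn)) => b.
have hm : (k.+1 + (n - k))%N = n.+1 by lia.
rewrite tmul_tprod -(slice_id b) -(@slice_tmul _ _ n.+1) ?size_tuple ?addn0 ?subnKC //;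
  try lia.
exact: (yop_tmul_VxI quadratic braid q_neq0 b hkn hm ha u).
Qed.
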